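(* Let $P$ be a poset with an $\mathbb{R}$-action $\Lambda$. Let $I,J$ be intervals of $P$ and $\epsilon\ge0$ with $I\subseteq\mathrm{Ex}^\Lambda_\epsilon(J)$ and $J\subseteq\mathrm{Ex}^\Lambda_\epsilon(I)$. Then: - $\Omega(I,\Lambda_{-\epsilon}(J))$ equals the set of all connected components of $I\cap\Lambda_{-\epsilon}(J)$; - $\Omega(J,\Lambda_{-\epsilon}(I))$ equals the set of all connected components of $J\cap\Lambda_{-\epsilon}(I)$.
   Context: An interval of a poset $P$ is a nonempty subset that is convex ($p,q\in I$, $p\le r\le q$ imply $r\in I$) and connected (any two elements are joined by a finite sequence of elements of the subset with consecutive ones comparable). Connected components of a subset are its maximal connected subsets in this sense. For $A\subseteq P$ nonempty, $A^\uparrow=\{p:\exists a\in A,\ a\le p\}$ and $A^\downarrow=\{p:\exists a\in A,\ p\le a\}$; $\emptyset^\uparrow=\emptyset^\downarrow=P$. An $\mathbb{R}$-action on $P$ is a family $\{\Lambda_\epsilon\}_{\epsilon\ge0}$ of poset automorphisms with $p\le\Lambda_\epsilon(p)$, $\Lambda_0=\mathrm{id}$ and $\Lambda_\epsilon\Lambda_\zeta=\Lambda_{\epsilon+\zeta}$. Write $\Lambda_{-\epsilon}=\Lambda_\epsilon^{-1}$, and $\Lambda_{-\epsilon}(J)$ for the image of $J$. $\mathrm{Ex}^\Lambda_\epsilon(A)=\Lambda_\epsilon^{-1}(A)^\uparrow\cap\Lambda_\epsilon(A)^\downarrow$, where $\Lambda_\epsilon^{-1}(A)$ is the preimage. For intervals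 $I,J$, $\Omega(I,J)$ is the set of connected components $C$ of $I\cap J$ satisfying $I\cap C^\downarrow\subseteq C$ and $J\cap C^\uparrow\subseteq C$. *)

From HB Require Import structures.
From mathcomp Require Import all_boot all_order all_algebra.
From mathcomp Require Import boolp classical_sets reals.
Set Implicit Arguments. Unset Strict Implicit. Unset Printing Implicit Defensive.
Import Order.TTheory GRing.Theory Num.Theory.
Local Open Scope classical_set_scope.

Section PosetDefs.
Context {d : Order.disp_t} {P : porderType d}.
Local Open Scope order_scope.

Definition comparableP (p q : P) : Prop := p <= q \/ q <= p.

Inductive zigzag (A : set P) : P -> P -> Prop :=
| zz_refl p : A p -> zigzag A p p
| zz_step p q r : zigzag A p q -> A r -> comparableP q r -> zigzag A p r.

Definition connectedP (A : set P) : Prop :=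
  forall p q, A p -> A q -> zigzag A p q.

Definition convexP (A : set P) : Prop :=
  forall p q r, A p -> A q -> p <= r -> r <= q -> A r.

Definition is_interval (I : set P) : Prop :=
  I !=set0 /\ convexP I /\ connectedP I.

Definition components (S : set P) : set (set P) :=
  [set C | C !=set0 /\ C `<=` S /\ connectedP C /\
           forall D, C `<=` D -> D `<=` S -> connectedP D -> D = C].

(* up- and down-closures, with the convention empty^up = empty^down = P *)
Definition upset (A : set P) : set P :=
  [set p | (A = set0) \/ exists2 a, A a & a <= p].
Definition downset (A : set P) : set P :=
  [set p | (A = set0) \/ exists2 a, A a & p <= a].

Definition is_poset_automorphism (f : P -> P) : Prop :=
  bijective f /\ forall p q, (f p <= f q) <-> (p <= q).

(* An R-action: a family Lam e (e >= 0) of poset automorphisms; the values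
   of Lam at negative arguments are irrelevant. *)
Definition R_action {R : realType} (Lam : R -> P -> P) : Prop :=
  (forall e, (0 <= e)%R -> is_poset_automorphism (Lam e)) /\
  (forall e p, (0 <= e)%R -> p <= Lam e p) /\
  (forall p, Lam 0%R p = p) /\
  (forall e z p, (0 <= e)%R -> (0 <= z)%R -> Lam e (Lam z p) = Lam (e + z)%R p).

(* Lam_{-e}(J) = image of J under (Lam e)^{-1} = preimage of J under Lam e *)
Definition Lam_neg {R : realType} (Lam : R -> P -> P) (e : R) (J : set P) : set P :=
  Lam e @^-1` J.

Definition Ex {R : realType} (Lam : R -> P -> P) (e : R) (A : set P) : set P :=
  upset (Lam e @^-1` A) `&` downset (Lam e @` A).

Definition Omega (I J : set P) : set (set P) :=
  [set C | components (I `&` J) C /\ I `&` downset C `<=` C /\ J `&` upset C `<=` C].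

End PosetDefs.

(* If p in I lies below a point c of a component C of I ∩ Λ_{-ε}(J), then
   since I ⊆ Ex(J) some a <= p has Λ_ε a in J, so Λ_ε a <= Λ_ε p <= Λ_ε c and
   convexity of J puts p in Λ_{-ε}(J); dually, using J ⊆ Ex(I) and convexity
   of I, a point of Λ_{-ε}(J) above c lies in I.  Either way the new point is
   comparable to c inside I ∩ Λ_{-ε}(J), so by maximality it lies in C.  The
   second claim is the first with I and J exchanged. *)
From HB Require Import structures.
From mathcomp Require Import all_boot all_order all_algebra.
From mathcomp Require Import boolp classical_sets reals.
Local Open Scope classical_set_scope.

Set Implicit Arguments.

Section PosetLemmas.
Context {d : Order.disp_t} {P : porderType d}.
Local Open Scope order_scope.
Implicit Types A C I J K : set P.

Lemma zigzag_end A p q : zigzag A p q -> A q.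
Proof. by case. Qed.

Lemma zigzag_sub A K p q : A `<=` K -> zigzag A p q -> zigzag K p q.
Proof.
move=> AK; elim=> [x Ax|x y z _ IH Az yz]; first exact/zz_refl/AK.
exact: zz_step IH (AK _ Az) yz.
Qed.

Lemma zigzag_trans A p q r : zigzag A p q -> zigzag A q r -> zigzag A p r.
Proof.
move=> pq qr; elim: qr pq => // x y z _ IH Az yz pq.
exact: zz_step (IH pq) Az yz.
Qed.

Lemma comparableP_sym (p q : P) : comparableP p q -> comparableP q p.
Proof. by case; [right|left]. Qed.

Lemma zigzag_sym A p q : zigzag A p q -> zigzag A q p.
Proof.
elim=> [x Ax|x y z xy IH Az yz]; first exact: zz_refl.
apply: zigzag_trans IH.
exact: zz_step (zz_refl Az) (zigzag_end xy) (comparableP_sym yz).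
Qed.

Lemma connectedP_setU1 C c p :
  connectedP C -> C c -> comparableP c p -> connectedP (C `|` [set p]).
Proof.
move=> Cconn Cc cp.
have to_c x : (C `|` [set p]) x -> zigzag (C `|` [set p]) x c.
  case=> [Cx|->]; first by apply: zigzag_sub (Cconn _ _ Cx Cc) => y; left.
  by apply: zz_step (zz_refl _) _ (comparableP_sym cp); [right|left].
by move=> x y Cx Cy; apply: zigzag_trans (to_c _ Cx) (zigzag_sym (to_c _ Cy)).
Qed.

Lemma components_comparable_mem K C c p :
  components K C -> C c -> K p -> comparableP c p -> C p.
Proof.
move=> [_ [CK [Cconn Cmax]]] Cc Kp cp.
suff <- : C `|` [set p] = C by right.
apply: Cmax; first by move=> x; left.
  by move=> x [/CK|->].
exact: connectedP_setU1 Cconn Cc cp.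
Qed.

Lemma Omega_eq_components I K :
  (forall p c, I p -> (I `&` K) c -> p <= c -> K p) ->
  (forall q c, K q -> (I `&` K) c -> c <= q -> I q) ->
  Omega I K = components (I `&` K).
Proof.
move=> down_closed up_closed; apply/seteqP; split=> [C [] //|C HC].
have [[c0 Cc0] [CIK _]] := HC.
have C_neq0 : C <> set0 by move=> C0; rewrite C0 in Cc0.
split=> //; split.
- move=> p [Ip [/C_neq0 //|[c Cc pc]]].
  apply: (components_comparable_mem HC Cc _ (or_intror pc)).
  by split=> //; apply: down_closed Ip (CIK _ Cc) pc.
- move=> q [Kq [/C_neq0 //|[c Cc cq]]].
  apply: (components_comparable_mem HC Cc _ (or_introl cq)).
  by split=> //; apply: up_closed Kq (CIK _ Cc) cq.
Qed.

Section OrderEmbedding.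
Variable f : P -> P.
Hypothesis f_mono : forall p q, f p <= f q <-> p <= q.

Lemma preimage_lower_closed I J p c :
  convexP J -> I `<=` upset (f @^-1` J) ->
  I p -> (f @^-1` J) c -> p <= c -> (f @^-1` J) p.
Proof.
move=> Jconv IJ Ip Jfc pc.
have [J0|[a Jfa ap]] := IJ _ Ip; first by rewrite J0 in Jfc.
by apply: Jconv Jfa Jfc _ _; apply/f_mono.
Qed.

Lemma image_upper_closed I J q c :
  convexP I -> J `<=` downset (f @` I) ->
  J (f q) -> I c -> c <= q -> I q.
Proof.
move=> Iconv JI Jfq Ic cq.
have fIc : (f @` I) (f c) by exists c.
have [I0|[_ [i Ii <-] fqi]] := JI _ Jfq; first by rewrite I0 in fIc.
by apply: Iconv Ic Ii cq _; apply/f_mono.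
Qed.

Lemma Omega_preimage_eq_components I J :
  convexP I -> convexP J ->
  I `<=` upset (f @^-1` J) -> J `<=` downset (f @` I) ->
  Omega I (f @^-1` J) = components (I `&` f @^-1` J).
Proof.
move=> Iconv Jconv IJ JI; apply: Omega_eq_components.
- by move=> p c Ip [_ Jfc]; apply: preimage_lower_closed Ip Jfc.
- by move=> q c Jfq [Ic _]; apply: image_upper_closed Jfq Ic.
Qed.

End OrderEmbedding.
End PosetLemmas.

Theorem lemma2p15 (d : Order.disp_t) (P : porderType d) (R : realType)
  (Lam : R -> P -> P) (I J : set P) (e : R) :
  R_action Lam -> is_interval I -> is_interval J -> (0 <= e)%R ->
  I `<=` Ex Lam e J -> J `<=` Ex Lam e I ->
  Omega I (Lam_neg Lam e J) = components (I `&` Lam_neg Lam e J) /\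
  Omega J (Lam_neg Lam e I) = components (J `&` Lam_neg Lam e I).
Proof.
move=> [aut _] [_ [Iconv _]] [_ [Jconv _]] e_ge0 IJ JI.
have [_ Lam_mono] := aut e e_ge0.
split; apply: Omega_preimage_eq_components => //.
- by move=> p /IJ [].
- by move=> q /JI [].
- by move=> q /JI [].
- by move=> p /IJ [].
Qed.
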